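(* Let $n\ge2$ and let $x=(x(1),\ldots,x(n))$ be a sequence of integers, and $i\in[n]$. (a) If $x'$ is obtained from $x$ by deleting the entry $x(i)$, then $\boldsymbol{b}(x')$ is obtained from $\boldsymbol{b}(x)$ by deleting the entry $\boldsymbol{b}(x)(i)$ or the entry $\boldsymbol{b}(x)(i+1)$ (the latter only when $i<n$). (b) If $x''$ is obtained from $x$ by replacing the entry $x(i)$ with another value, then one of the following holds: (1) $(\boldsymbol{b}(x)(i),\boldsymbol{b}(x)(i+1))=(1,0)$ and $(\boldsymbol{b}(x'')(i),\boldsymbol{b}(x'')(i+1))=(0,1)$, or vice versa, with all other entries equal; (2) $\boldsymbol{b}(x'')$ differs from $\boldsymbol{b}(x)$ in exactly one of the entries $i$, $i+1$; (3) $\boldsymbol{b}(x'')=\boldsymbol{b}(x)$.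
   Context: For an integer sequence $x$ of length $N$, $\boldsymbol{b}(x)\in\{0,1\}^N$ is defined by $\boldsymbol{b}(x)(1)=1$ and, for $2\le i\le N$, $\boldsymbol{b}(x)(i)=1$ if $x(i)>x(i-1)$ and $\boldsymbol{b}(x)(i)=0$ otherwise. Entries with index $N+1$ are disregarded. *)

From mathcomp Require Import all_boot all_order all_algebra.
Set Implicit Arguments. Unset Strict Implicit. Unset Printing Implicit Defensive.
Import Order.TTheory GRing.Theory Num.Theory.

(* Integer sequences are [seq int]; entries are indexed 1-based in the
   paper, 0-based by [nth]. *)

Definition bvec (x : seq int) : seq bool :=
  mkseq (fun k => if k is k'.+1 then (nth (0:int) x k' < nth (0:int) x k)%R else true)
        (size x).

(* 1-based entry k of b(x); entries with index outside [1, size x]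
   (in particular index N+1) read as [false] on both sides, i.e. they are
   disregarded. *)
Definition bent (x : seq int) (k : nat) : bool := nth false (bvec x) k.-1.

Definition delnth {T : Type} (j : nat) (s : seq T) : seq T :=
  take j.-1 s ++ drop j s.

From mathcomp Require Import all_boot all_order all_algebra zify.
Set Implicit Arguments. Unset Strict Implicit. Unset Printing Implicit Defensive.
Import Order.TTheory GRing.Theory Num.Theory.

(* Deleting x(i) shifts the
   entries after i down by one and merges b(x)(i) and b(x)(i+1) into the single
   comparison x(i-1) < x(i+1), which agrees with x(i-1) < x(i) or with
   x(i) < x(i+1): if these two agree, transitivity forces the third to agree.
   Replacing x(i) by v only affects b(x)(i) and b(x)(i+1), and both can flip
   only if they differ: x(i-1) < x(i) < x(i+1) together with v <= x(i-1) and
   x(i+1) <= v is contradictory, and dually. *)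

Lemma lt_mid_cases d (T : orderType d) (a b c : T) :
  (a < c)%O = (a < b)%O \/ (a < c)%O = (b < c)%O.
Proof.
case: (ltP a b) => [ab|ba]; case: (ltP b c) => [bc|cb].
- by left; rewrite (lt_trans ab bc).
- by case: (a < c)%O; [left | right].
- by case: (a < c)%O; [right | left].
- by left; apply/negbTE; rewrite -leNgt (le_trans cb ba).
Qed.

Lemma lt_flip_both d (T : orderType d) (a u v c : T) :
  (a < v)%O != (a < u)%O -> (v < c)%O != (u < c)%O -> (a < u)%O = ~~ (u < c)%O.
Proof.
case: (ltP a u) => [au|ua]; case: (ltP u c) => [uc|cu] //=;
  case: (ltP a v) => [av|va]; case: (ltP v c) => [vc|cv] //= _ _.
- by have := lt_le_trans (lt_trans au uc) (le_trans cv va); rewrite ltxx.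
- by have := lt_trans (lt_le_trans vc (le_trans cu ua)) av; rewrite ltxx.
Qed.

Lemma neq_only_at (T : eqType) (P : T -> Prop) (f g : T -> bool) j :
  f j != g j -> (forall k, P k -> k != j -> f k = g k) ->
  forall k, P k -> (f k != g k <-> k = j).
Proof.
move=> fj off k Pk; split=> [fk | -> //].
by apply/eqP; apply: contraNT fk => kj; rewrite off ?eqxx.
Qed.

Lemma size_delnth T i (s : seq T) :
  0 < i <= size s -> size (delnth i s) = (size s).-1.
Proof. by move=> hi; rewrite /delnth size_cat size_take_min size_drop; lia. Qed.

Lemma nth_delnth T (d : T) s i k :
  0 < i -> nth d (delnth i s) k = nth d s (bump i.-1 k).
Proof.
move=> i_gt0; rewrite /delnth /bump nth_cat size_take_min.
case: (ltnP k (minn i.-1 (size s))) => hk.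
  by rewrite nth_take; [congr nth; lia | lia].
rewrite nth_drop; case: (leqP i.-1 (size s)) => hs.
  by congr nth; lia.
by rewrite !nth_default //; lia.
Qed.

Lemma size_set_nth_ltn T (d : T) s p v :
  p < size s -> size (set_nth d s p v) = size s.
Proof. by move=> hp; rewrite size_set_nth (maxn_idPr hp). Qed.

Lemma size_bvec x : size (bvec x) = size x.
Proof. exact: size_mkseq. Qed.

Lemma nth_bvec x k : nth false (bvec x) k =
  (k < size x) && (if k is k'.+1 then (nth 0 x k' < nth 0 x k)%R else true).
Proof.
case: (ltnP k (size x)) => hk; first by rewrite nth_mkseq.
by rewrite nth_default ?size_bvec.
Qed.

Lemma bvec_eq_bent x y :
  size x = size y -> (forall k, 0 < k -> bent x k = bent y k) -> bvec x = bvec y.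
Proof.
move=> sxy bxy; apply: (eq_from_nth (x0 := false)); first by rewrite !size_bvec.
by move=> k _; apply: (bxy k.+1).
Qed.

Lemma nth_bvec_delnth x i k : 0 < i <= size x -> k != i.-1 ->
  nth false (bvec (delnth i x)) k = nth false (bvec x) (bump i.-1 k).
Proof.
move=> hi ki; rewrite !nth_bvec size_delnth //.
case: k ki => [|k] ki.
  have -> : bump i.-1 0 = 0 by rewrite /bump; lia.
  by rewrite !andbT; lia.
rewrite !nth_delnth; try lia.
case: (leqP i.-1 k) => ik.
  have -> : bump i.-1 k = k.+1 by rewrite /bump; lia.
  have -> : bump i.-1 k.+1 = k.+2 by rewrite /bump; lia.
  by congr andb; lia.
have -> : bump i.-1 k = k by rewrite /bump; lia.
have -> : bump i.-1 k.+1 = k.+1 by rewrite /bump; lia.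
by congr andb; lia.
Qed.

Lemma nth_bvec_delnth_mid x i : 0 < i <= size x ->
  nth false (bvec (delnth i x)) i.-1 = nth false (delnth i (bvec x)) i.-1 \/
  i < size x /\
    nth false (bvec (delnth i x)) i.-1 = nth false (delnth i.+1 (bvec x)) i.-1.
Proof.
move=> /[dup] hi /andP[i_gt0 _]; rewrite !nth_delnth //.
have -> : bump i.-1 i.-1 = i by rewrite /bump; lia.
have -> : bump i.+1.-1 i.-1 = i.-1 by rewrite /bump; lia.
case: (ltnP i (size x)) => [lt_ix|ge_ix]; last first.
  by left; rewrite !nth_default ?size_bvec ?size_delnth //; lia.
rewrite !nth_bvec size_delnth // lt_ix /=.
case: i i_gt0 hi lt_ix => [|[|i]] // _ hi lt_ix.
  by right; split=> //; rewrite !andbT; lia.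
rewrite /= !nth_delnth //.
have -> : bump i.+1 i = i by rewrite /bump; lia.
have -> : bump i.+1 i.+1 = i.+2 by rewrite /bump; lia.
have -> : i.+1 < (size x).-1 by lia.
have -> : i.+1 < size x by lia.
have [e|e] := @lt_mid_cases _ _ (nth 0%R x i) (nth 0%R x i.+1) (nth 0%R x i.+2).
  by right.
by left.
Qed.

Lemma bvec_delnth_eq x i j : 0 < i <= j -> j <= i.+1 -> j <= size x ->
  nth false (bvec (delnth i x)) i.-1 = nth false (delnth j (bvec x)) i.-1 ->
  bvec (delnth i x) = delnth j (bvec x).
Proof.
move=> hij hji hjx e; apply: (eq_from_nth (x0 := false)).
  by rewrite size_bvec !size_delnth ?size_bvec //; lia.
move=> k _; case: (k =P i.-1) => [-> // | /eqP ki].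
rewrite nth_bvec_delnth ?nth_delnth //; try lia.
by congr nth; rewrite /bump; lia.
Qed.

Lemma bent_set_nth_off (x : seq int) i (v : int) k :
  0 < i <= size x -> 0 < k -> k != i -> k != i.+1 ->
  bent (set_nth 0%R x i.-1 v) k = bent x k.
Proof.
move=> hi; case: k => // k _ ki kSi.
rewrite /bent /= !nth_bvec size_set_nth_ltn; last lia.
case: k ki kSi => [|k] ki kSi //=.
rewrite !nth_set_nth /=.
have -> : (k == i.-1) = false by lia.
by have -> : (k.+1 == i.-1) = false by lia.
Qed.

Lemma bent_set_nth_succ_flip (x : seq int) i (v : int) : 0 < i <= size x ->
  bent (set_nth 0%R x i.-1 v) i.+1 != bent x i.+1 -> i < size x.
Proof.
move=> hi; apply: contraTT; rewrite -leqNgt => ge_ix.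
by rewrite /bent /= !nth_default ?size_bvec ?size_set_nth_ltn //; lia.
Qed.

Lemma bent_set_nth_flip_both (x : seq int) i (v : int) : 0 < i <= size x ->
  bent (set_nth 0%R x i.-1 v) i != bent x i ->
  bent (set_nth 0%R x i.-1 v) i.+1 != bent x i.+1 -> bent x i = ~~ bent x i.+1.
Proof.
move=> hi f1 f2; have lt_ix := bent_set_nth_succ_flip hi f2; move: f1 f2.
rewrite /bent /= !nth_bvec size_set_nth_ltn; last lia.
case: i hi lt_ix => [|[|i]] // hi lt_ix; first by rewrite /= eqxx.
rewrite /= !nth_set_nth /= eqxx.
have -> : (i == i.+1) = false by lia.
have -> : (i.+2 == i.+1) = false by lia.
have -> : i.+1 < size x by lia.
rewrite lt_ix /=; exact: lt_flip_both.
Qed.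

Theorem proposition1 (n : nat) (x : seq int) (i : nat) :
  2 <= n -> size x = n -> 1 <= i <= n ->
  (* (a) deletion *)
  (bvec (delnth i x) = delnth i (bvec x) \/
     (i < n /\ bvec (delnth i x) = delnth i.+1 (bvec x)))
  /\
  (* (b) substitution *)
  (forall v : int, v != nth (0:int) x i.-1 ->
     let x'' := set_nth (0:int) x i.-1 v in
     (* (1) *)
     (i < n /\
        (((bent x i, bent x i.+1) = (true, false) /\
          (bent x'' i, bent x'' i.+1) = (false, true)) \/
         ((bent x i, bent x i.+1) = (false, true) /\
          (bent x'' i, bent x'' i.+1) = (true, false))) /\
        (forall k, 1 <= k <= n -> k != i -> k != i.+1 ->
           bent x'' k = bent x k))
     \/
     (* (2) *)
     (exists j, (j = i \/ (j = i.+1 /\ i < n)) /\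
        forall k, 1 <= k <= n -> (bent x'' k != bent x k <-> k = j))
     \/
     (* (3) *)
     bvec x'' = bvec x).
Proof.
move=> _ <-{n} hi; split.
  have [e | [lt_ix e]] := nth_bvec_delnth_mid hi; [left | right; split=> //];
    apply: bvec_delnth_eq e; lia.
move=> v _ x''; have off k : 0 < k -> k != i -> k != i.+1 -> bent x'' k = bent x k.
  exact: bent_set_nth_off.
have [f1|/negPn/eqP e1] := boolP (bent x'' i != bent x i);
  have [f2|/negPn/eqP e2] := boolP (bent x'' i.+1 != bent x i.+1).
- left; split; first exact: bent_set_nth_succ_flip f2.
  split; last by move=> k /andP[k_gt0 _]; apply: off.
  move: f1 f2 (bent_set_nth_flip_both hi f1 f2).
  by case: (bent x i) (bent x i.+1) (bent x'' i) (bent x'' i.+1) => [] [] [] [] //=;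
    [left | right].
- right; left; exists i; split; first by left.
  move=> k /andP[k_gt0 _]; apply: (@neq_only_at _ (leq 1) _ _ _ f1) k_gt0.
  move=> k' k'_gt0 k'i.
  by case: (k' =P i.+1) => [-> // | /eqP k'Si]; apply: off.
- right; left; exists i.+1; split.
    by right; split=> //; exact: bent_set_nth_succ_flip f2.
  move=> k /andP[k_gt0 _]; apply: (@neq_only_at _ (leq 1) _ _ _ f2) k_gt0.
  move=> k' k'_gt0 k'Si.
  by case: (k' =P i) => [-> // | /eqP k'i]; apply: off.
- right; right; apply: bvec_eq_bent => [|k k_gt0].
    by rewrite size_set_nth_ltn //; lia.
  case: (k =P i) => [-> // | /eqP ki].
  by case: (k =P i.+1) => [-> // | /eqP kSi]; apply: off.
Qed.
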